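(* Let $G$ be a profinite group satisfying the maximum condition on closed subgroups. The following are equivalent: (i) every isolated orbital closed subgroup of $G$ is normal in $G$; (ii) every orbital closed subgroup $K$ of $G$ contains a subgroup $N$ of finite index in $K$ which is normal in $G$.
   Context: A closed subgroup $K$ of a profinite group $G$ is orbital if $\mathbf{N}_G(K)$ is open in $G$. An orbital closed subgroup $H$ is isolated orbital if for every orbital closed subgroup $H'$ of $G$ with $H\lneq H'\le G$ we have $[H':H]=\infty$. *)

From Stdlib Require Import List.

Record ProfiniteGroup := {
  car :> Type;
  mul : car -> car -> car;
  inv : car -> car;
  one : car;
  mulA : forall x y z, mul x (mul y z) = mul (mul x y) z;
  mul1g : forall x, mul one x = x;
  mulVg : forall x, mul (inv x) x = one;
  is_open : (car -> Prop) -> Prop;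
  open_full : is_open (fun _ => True);
  open_inter : forall U V, is_open U -> is_open V ->
      is_open (fun x => U x /\ V x);
  open_union : forall F : (car -> Prop) -> Prop,
      (forall U, F U -> is_open U) -> is_open (fun x => exists U, F U /\ U x);
  (* (x, y) |-> x * y^-1 is continuous for the product topology *)
  mul_inv_cont : forall U x y, is_open U -> U (mul x (inv y)) ->
      exists V W, is_open V /\ is_open W /\ V x /\ W y /\
        (forall a b, V a -> W b -> U (mul a (inv b)));
  compact : forall F : (car -> Prop) -> Prop,
      (forall U, F U -> is_open U) ->
      (forall x, exists U, F U /\ U x) ->
      exists l : list (car -> Prop), (forall U, In U l -> F U) /\
        (forall x, exists U, In U l /\ U x);
  hausdorff : forall x y, x <> y ->
      exists U V, is_open U /\ is_open V /\ U x /\ V y /\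
        (forall z, U z -> V z -> False);
  (* totally disconnected: connected subsets have at most one point *)
  totally_disconnected : forall S : car -> Prop,
      (forall U V, is_open U -> is_open V ->
         (forall x, S x -> U x \/ V x) ->
         (exists x, S x /\ U x) -> (exists x, S x /\ V x) ->
         exists x, S x /\ U x /\ V x) ->
      forall x y, S x -> S y -> x = y
}.

Section Defs.
Variable G : ProfiniteGroup.

Definition is_closed (A : G -> Prop) : Prop := is_open G (fun x => ~ A x).

Definition is_subgroup (H : G -> Prop) : Prop :=
  H (one G) /\ (forall x y, H x -> H y -> H (mul G x y)) /\
  (forall x, H x -> H (inv G x)).

Definition closed_subgroup (H : G -> Prop) : Prop :=
  is_subgroup H /\ is_closed H.

Definition subset (A B : G -> Prop) : Prop := forall x, A x -> B x.

Definition normalizer (K : G -> Prop) : G -> Prop :=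
  fun g => forall x, K x <-> K (mul G (inv G g) (mul G x g)).

Definition normal (H : G -> Prop) : Prop :=
  forall g x, H x -> H (mul G g (mul G x (inv G g))).

Definition orbital (K : G -> Prop) : Prop :=
  closed_subgroup K /\ is_open G (normalizer K).

(* [K : H] finite (for H <= K): finitely many left cosets of H cover K *)
Definition finite_index (H K : G -> Prop) : Prop :=
  exists l : list G, (forall g, In g l -> K g) /\
    forall x, K x -> exists g, In g l /\ H (mul G (inv G g) x).

Definition isolated_orbital (H : G -> Prop) : Prop :=
  orbital H /\
  forall H', orbital H' -> subset H H' -> (exists x, H' x /\ ~ H x) ->
    ~ finite_index H H'.

Definition max_condition : Prop :=
  forall S : (G -> Prop) -> Prop,
    (forall H, S H -> closed_subgroup H) -> (exists H, S H) ->
    exists M, S M /\ forall H, S H -> subset M H -> subset H M.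

End Defs.

From Stdlib Require Import List Permutation Lia ClassicalEpsilon FunctionalExtensionality PropExtensionality.
Import ListNotations.

(* (i) => (ii): given an orbital K, the maximum condition yields an orbital M >= K, maximal
   among those containing K with finite index; M is then isolated, hence normal.  Since
   N_G(K) is open in the compact group G, K has only finitely many conjugates, and their
   intersection is normal in G and of finite index in M, hence in K.

   (ii) => (i): let H be isolated orbital and N <= H normal in G of finite index in H.
   Modulo N, the normal closure L of H is generated by finitely many conjugates of coset
   representatives; they have finite order and are permuted by conjugation, so by
   Dietzmann's lemma L/N is finite.  Thus [L : H] is finite, L is closed and normal,
   hence orbital, and isolation forces L = H. *)

Section CountOcc.
Variable A : Type.
Variable eq_dec : forall x y : A, {x = y} + {x <> y}.

Lemma length_count_occ_remove (w : list A) c :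
  length w = count_occ eq_dec w c + length (remove eq_dec c w).
Proof.
  induction w as [|x w IH]; simpl; auto.
  destruct (eq_dec x c), (eq_dec c x); subst; simpl; congruence || lia.
Qed.

Lemma count_occ_remove_le (w : list A) c d :
  count_occ eq_dec (remove eq_dec c w) d <= count_occ eq_dec w d.
Proof.
  induction w as [|x w IH]; simpl; auto.
  destruct (eq_dec c x); simpl; destruct (eq_dec x d); lia.
Qed.

Lemma count_occ_pigeonhole (C w : list A) b : incl w C -> length C * b < length w ->
  exists c, In c C /\ b < count_occ eq_dec w c.
Proof.
  revert w. induction C as [|c C IH]; intros w Hw Hlen.
  - destruct w as [|x w]; [simpl in Hlen; lia|destruct (Hw x (or_introl eq_refl))].
  - destruct (Compare_dec.le_lt_dec (count_occ eq_dec w c) b) as [Hc|Hc]; [|exists c; split; [left|]; auto].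
    destruct (IH (remove eq_dec c w)) as [d [Hd Hbd]].
    + intros x Hx. apply in_remove in Hx as [Hx Hxc]. destruct (Hw x Hx); [congruence|auto].
    + rewrite (length_count_occ_remove w c) in Hlen. simpl in Hlen. lia.
    + exists d. split; [right; auto|]. pose proof (count_occ_remove_le w c d). lia.
Qed.
End CountOcc.

Fixpoint words_upto {A : Type} (C : list A) (n : nat) : list (list A) :=
  match n with
  | 0 => [nil]
  | S n => nil :: flat_map (fun c => map (cons c) (words_upto C n)) C
  end.

Lemma in_words_upto {A : Type} (C : list A) n w : incl w C -> length w <= n -> In w (words_upto C n).
Proof.
  revert w. induction n as [|n IH]; intros [|x w] Hw Hl; simpl in *; auto; try lia.
  right. apply in_flat_map. exists x. split; [apply Hw; left; auto|].
  apply in_map, IH; [intros a Ha; apply Hw; right; auto|lia].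
Qed.

Lemma words_upto_incl {A : Type} (C : list A) n w : In w (words_upto C n) -> incl w C.
Proof.
  revert w. induction n as [|n IH]; intros w Hw; simpl in Hw.
  - destruct Hw as [<-|[]]. intros a [].
  - destruct Hw as [<-|Hw]; [intros a []|].
    apply in_flat_map in Hw as [c [Hc Hw]]. apply in_map_iff in Hw as [w' [<- Hw']].
    intros a [<-|Ha]; auto. apply (IH w'); auto.
Qed.
Section ProfiniteGroupTheory.
Variable G : ProfiniteGroup.
Local Notation "x * y" := (mul G x y).
Local Notation inv := (inv G).
Local Notation one := (one G).

Lemma mulgV x : x * inv x = one.
Proof.
  rewrite <- (mul1g G (x * inv x)), <- (mulVg G (inv x)) at 1.
  rewrite <- mulA, (mulA G (inv x) x), mulVg, mul1g. apply mulVg.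
Qed.

Lemma mulg1 x : x * one = x.
Proof. rewrite <- (mulVg G x), mulA, mulgV, mul1g. reflexivity. Qed.

Lemma invgK x : inv (inv x) = x.
Proof. rewrite <- (mulg1 (inv (inv x))), <- (mulVg G x), mulA, mulVg, mul1g. reflexivity. Qed.

Lemma mulgK x y : (x * y) * inv y = x.
Proof. rewrite <- mulA, mulgV, mulg1. reflexivity. Qed.

Lemma mulgVK x y : (x * inv y) * y = x.
Proof. rewrite <- mulA, mulVg, mulg1. reflexivity. Qed.

Lemma invMg x y : inv (x * y) = inv y * inv x.
Proof.
  assert (E : (x * y) * (inv y * inv x) = one) by (rewrite mulA, mulgK, mulgV; reflexivity).
  rewrite <- (mulg1 (inv (x * y))), <- E, mulA, mulVg, mul1g. reflexivity.
Qed.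

Lemma invg1 : inv one = one.
Proof. rewrite <- (mulg1 (inv one)). apply mulVg. Qed.

Ltac gsimpl := repeat progress
  (rewrite ?mulA, ?invMg, ?invgK, ?invg1, ?mulgK, ?mulgVK, ?mulVg, ?mulgV, ?mul1g, ?mulg1).

Lemma lcoset_sym (H : G -> Prop) x y : is_subgroup G H -> H (inv x * y) -> H (inv y * x).
Proof. intros [_ [_ HV]] Hxy. apply HV in Hxy. rewrite invMg, invgK in Hxy. auto. Qed.

Lemma lcoset_trans (H : G -> Prop) x y z : is_subgroup G H ->
  H (inv x * y) -> H (inv y * z) -> H (inv x * z).
Proof.
  intros [_ [HM _]] Hxy Hyz.
  replace (inv x * z) with ((inv x * y) * (inv y * z)) by (gsimpl; reflexivity). auto.
Qed.

Lemma open_ext (U V : G -> Prop) : is_open G U -> (forall x, U x <-> V x) -> is_open G V.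
Proof.
  intros HU HE. replace V with U; auto.
  apply functional_extensionality; intro x. apply propositional_extensionality, HE.
Qed.

Lemma open_local (U : G -> Prop) :
  (forall x, U x -> exists V, is_open G V /\ V x /\ forall z, V z -> U z) -> is_open G U.
Proof.
  intro H. eapply open_ext.
  - apply (open_union G (fun V => is_open G V /\ forall z, V z -> U z)). tauto.
  - intro x; split.
    + intros [V [[_ HVU] Vx]]. auto.
    + intro Ux. destruct (H x Ux) as [V [HV [Vx HVU]]]. eauto.
Qed.

Lemma open_rmul (U : G -> Prop) a : is_open G U -> is_open G (fun x => U (x * inv a)).
Proof.
  intro HU. apply open_local. intros x Hx.
  destruct (mul_inv_cont G U x a HU Hx) as [V [W [HV [_ [Vx [Wa HVW]]]]]]. eauto.
Qed.

Lemma open_inv (U : G -> Prop) : is_open G U -> is_open G (fun x => U (inv x)).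
Proof.
  intro HU. apply open_local. intros x Hx. rewrite <- mul1g in Hx.
  destruct (mul_inv_cont G U one x HU Hx) as [V [W [_ [HW [V1 [Wx HVW]]]]]].
  exists W. repeat split; auto. intros z Wz. rewrite <- mul1g. auto.
Qed.

Lemma open_lmul (U : G -> Prop) a : is_open G U -> is_open G (fun x => U (a * x)).
Proof.
  intro HU. apply open_local. intros x Hx. rewrite <- (invgK x) in Hx.
  destruct (mul_inv_cont G U a (inv x) HU Hx) as [V [W [_ [HW [Va [Wx HVW]]]]]].
  exists (fun z => W (inv z)). split; [apply open_inv; auto|split; auto].
  intros z Wz. rewrite <- (invgK z). auto.
Qed.

Lemma closed_lcoset (H : G -> Prop) a : is_closed G H -> is_closed G (fun x => H (inv a * x)).
Proof. apply (open_lmul (fun x => ~ H x)). Qed.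

Lemma closed_union_list {X : Type} (F : X -> G -> Prop) (l : list X) :
  (forall a, In a l -> is_closed G (F a)) ->
  is_closed G (fun x => exists a, In a l /\ F a x).
Proof.
  unfold is_closed. induction l as [|a l IH]; intro HF.
  - eapply open_ext; [apply open_full|]. intro x; split; [intros _ [? [[] _]]|auto].
  - eapply open_ext; [apply open_inter; [apply HF; left; auto|apply IH; intros; apply HF; right; auto]|].
    intro x; simpl; split.
    + intros [Ha Hl] [b [[<-|Hb] Fb]]; eauto.
    + intro Hn. split; intro Hx; apply Hn; firstorder.
Qed.

Definition conjugate (g x : G) : G := g * (x * inv g).
Definition prodg (w : list G) : G := fold_right (mul G) one w.

Lemma conjugateM g x y : conjugate g (x * y) = conjugate g x * conjugate g y.
Proof. unfold conjugate. gsimpl. reflexivity. Qed.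
Lemma conjugateV g x : conjugate g (inv x) = inv (conjugate g x).
Proof. unfold conjugate. gsimpl. reflexivity. Qed.
Lemma conjugate1 g : conjugate g one = one.
Proof. unfold conjugate. gsimpl. reflexivity. Qed.
Lemma conjugate_comp g h x : conjugate g (conjugate h x) = conjugate (g * h) x.
Proof. unfold conjugate. gsimpl. reflexivity. Qed.
Lemma conjugate_one x : conjugate one x = x.
Proof. unfold conjugate. gsimpl. reflexivity. Qed.

Lemma is_subgroup_conjugate (H : G -> Prop) a :
  is_subgroup G H -> is_subgroup G (fun y => H (conjugate a y)).
Proof.
  intros [H1 [HM HV]]. split; [|split]; intros;
    rewrite ?conjugate1, ?conjugateM, ?conjugateV; auto.
Qed.

Lemma prodg_app w1 w2 : prodg (w1 ++ w2) = prodg w1 * prodg w2.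
Proof. induction w1; simpl; [rewrite mul1g|rewrite IHw1, mulA]; reflexivity. Qed.
Lemma prodg_conjugate g w : prodg (map (conjugate g) w) = conjugate g (prodg w).
Proof. induction w; simpl; [rewrite conjugate1|rewrite IHw, conjugateM]; reflexivity. Qed.
Lemma prodg_rev_inv w : prodg (rev (map inv w)) = inv (prodg w).
Proof. induction w; simpl; [rewrite invg1|rewrite prodg_app, IHw; simpl; gsimpl]; reflexivity. Qed.
Lemma prodg_repeat_conjugate g t k : prodg (repeat (conjugate g t) k) = conjugate g (prodg (repeat t k)).
Proof. induction k; simpl; [rewrite conjugate1|rewrite IHk, conjugateM]; reflexivity. Qed.

Lemma is_subgroup_prodg (H : G -> Prop) w : is_subgroup G H ->
  (forall x, In x w -> H x) -> H (prodg w).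
Proof.
  intros [H1 [HM _]]. induction w as [|x w IH]; intro Hw; simpl; auto.
  apply HM; [apply Hw; left|apply IH; intros; apply Hw; right]; auto.
Qed.

Lemma finite_index_ext (A A' K : G -> Prop) :
  (forall x, A x <-> A' x) -> finite_index G A K -> finite_index G A' K.
Proof. intros HE [l [Hl Hcov]]. exists l; split; auto. firstorder. Qed.

Lemma finite_index_refl (K : G -> Prop) : is_subgroup G K -> finite_index G K K.
Proof.
  intros [K1 _]. exists [one]; split; [intros g [<-|[]]; auto|].
  intros x Kx. exists one; split; [left; auto|]. rewrite invg1, mul1g; auto.
Qed.

Lemma finite_index_trans (A M K : G -> Prop) : is_subgroup G K -> subset G M K ->
  finite_index G A M -> finite_index G M K -> finite_index G A K.
Proof.
  intros [_ [KM _]] sMK [l1 [Hl1 cov1]] [l2 [Hl2 cov2]].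
  exists (flat_map (fun a => map (mul G a) l1) l2); split.
  - intros g Hg. apply in_flat_map in Hg as [a [Ha Hb]]. apply in_map_iff in Hb as [b [<- Hb]]. auto.
  - intros x Kx. destruct (cov2 x Kx) as [a [Ha Ma]]. destruct (cov1 _ Ma) as [b [Hb Ab]].
    exists (a * b); split; [apply in_flat_map; exists a; split; auto; apply in_map; auto|].
    rewrite invMg, <- mulA; auto.
Qed.

(* Each class lies in a single left coset of [A], so one point of [K] from each nonempty
   class gives coset representatives. *)
Lemma finite_index_of_classes {X : Type} (A K : G -> Prop) (cls : X -> G -> Prop) (R : list X) :
  is_subgroup G A -> (forall r x y, cls r x -> cls r y -> A (inv x * y)) ->
  (forall x, K x -> exists r, In r R /\ cls r x) -> finite_index G A K.
Proof.
  intros sA Hcls Hcov.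
  assert (Hreps : exists l, (forall g, In g l -> K g) /\
     forall r, In r R -> forall x, K x -> cls r x -> exists g, In g l /\ A (inv g * x)).
  { clear Hcov. induction R as [|r R [l [Hl Hrep]]].
    - exists nil. split; [intros _ []|intros _ []].
    - destruct (classic (exists y, K y /\ cls r y)) as [[y [Ky Cy]]|Hn].
      + exists (y :: l). split; [intros g [<-|Hg]; auto|].
        intros r' [<-|Hr'] x Kx Cx; [exists y; split; [left|]; eauto|].
        destruct (Hrep r' Hr' x Kx Cx) as [g [? ?]]. exists g; split; [right|]; auto.
      + exists l. split; auto. intros r' [<-|Hr'] x Kx Cx; [exfalso; eauto|eauto]. }
  destruct Hreps as [l [Hl Hrep]]. exists l; split; auto.
  intros x Kx. destruct (Hcov x Kx) as [r [Hr Cx]]. eauto.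
Qed.

Lemma finite_index_sub (A K K' : G -> Prop) : is_subgroup G A -> subset G K' K ->
  finite_index G A K -> finite_index G A K'.
Proof.
  intros sA sK'K [l [_ Hcov]].
  apply (finite_index_of_classes A K' (fun r x => A (inv r * x)) l sA).
  - intros r x y Hx Hy. apply (lcoset_trans A x r y sA); auto. apply lcoset_sym; auto.
  - intros x Kx. apply Hcov; auto.
Qed.

Lemma finite_index_inter (A B K : G -> Prop) : is_subgroup G A -> is_subgroup G B ->
  finite_index G A K -> finite_index G B K -> finite_index G (fun x => A x /\ B x) K.
Proof.
  intros sA sB [la [_ covA]] [lb [_ covB]].
  apply (finite_index_of_classes _ K (fun r x => A (inv (fst r) * x) /\ B (inv (snd r) * x))
           (list_prod la lb)).
  - destruct sA as [A1 [AM AV]], sB as [B1 [BM BV]]. split; [|split]; [split|..]; firstorder.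
  - intros r x y [Ax Bx] [Ay By]. split;
      [apply (lcoset_trans A x (fst r) y)|apply (lcoset_trans B x (snd r) y)];
      auto; apply lcoset_sym; auto.
  - intros x Kx. destruct (covA x Kx) as [a [Ha Aa]], (covB x Kx) as [b [Hb Bb]].
    exists (a, b). split; auto. apply in_prod; auto.
Qed.

Lemma is_subgroup_bigcap {X : Type} (F : X -> G -> Prop) (l : list X) :
  (forall a, In a l -> is_subgroup G (F a)) -> is_subgroup G (fun y => forall a, In a l -> F a y).
Proof. intro HF. split; [|split]; intros; apply HF; auto; apply HF; auto. Qed.

Lemma finite_index_bigcap {X : Type} (F : X -> G -> Prop) (l : list X) (K : G -> Prop) :
  K one -> (forall a, In a l -> is_subgroup G (F a) /\ finite_index G (F a) K) ->
  finite_index G (fun y => forall a, In a l -> F a y) K.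
Proof.
  intros K1. induction l as [|a l IH]; intro HF.
  - exists [one]. split; [intros g [<-|[]]; auto|]. intros x _. exists one; split; [left|]; auto.
    intros _ [].
  - eapply finite_index_ext; [|apply finite_index_inter;
      [apply (proj1 (HF a (or_introl eq_refl)))
      |apply (is_subgroup_bigcap F l); intros; apply HF; right; auto
      |apply (proj2 (HF a (or_introl eq_refl)))
      |apply IH; intros; apply HF; right; auto]].
    intro x; simpl; split; [intros [Fa Fl] b [<-|Hb]; auto|auto].
Qed.

Lemma finite_index_conjugate (K M : G -> Prop) a : normal G M ->
  finite_index G K M -> finite_index G (fun y => K (conjugate a y)) M.
Proof.
  intros nM [l [Hl cov]]. exists (map (conjugate (inv a)) l). split.
  - intros g Hg. apply in_map_iff in Hg as [h [<- Hh]]. apply nM, Hl; auto.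
  - intros x Mx. destruct (cov (conjugate a x) (nM a x Mx)) as [h [Hh Kh]].
    exists (conjugate (inv a) h). split; [apply in_map; auto|].
    replace (conjugate a (inv (conjugate (inv a) h) * x)) with (inv h * conjugate a x)
      by (unfold conjugate; gsimpl; reflexivity). auto.
Qed.

(* Compactness: the open subgroup [normalizer K] has finitely many right cosets. *)
Lemma orbital_finitely_many_conjugates (K : G -> Prop) : orbital G K ->
  exists lg, forall g, exists a, In a lg /\ forall y, K (conjugate g y) <-> K (conjugate a y).
Proof.
  intros [_ Hopen].
  destruct (compact G (fun U => exists a, U = (fun x => normalizer G K (x * inv a))))
    as [l [Hl Hcov]].
  - intros U [a ->]. apply open_rmul; auto.
  - intro x. exists (fun z => normalizer G K (z * inv x)). split; [exists x; auto|].
    rewrite mulgV. intro y. gsimpl. tauto.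
  - assert (Hreps : exists la, forall U, In U l ->
              exists a, In a la /\ U = (fun x => normalizer G K (x * inv a))).
    { clear Hcov. induction l as [|U l IH].
      - exists nil. intros _ [].
      - destruct IH as [la Hla]; [intros; apply Hl; right; auto|].
        destruct (Hl U (or_introl eq_refl)) as [a Ha].
        exists (a :: la). intros V [<-|HV]; [exists a; split; [left|]; auto|].
        destruct (Hla V HV) as [b [? ?]]. exists b; split; [right|]; auto. }
    destruct Hreps as [la Hla]. exists la. intro g.
    destruct (Hcov g) as [U [HU Ug]]. destruct (Hla U HU) as [a [Ha ->]].
    exists a; split; auto. intro y.
    specialize (Ug (conjugate (g * inv a) (conjugate a y))).
    rewrite conjugate_comp, mulgVK in Ug. rewrite Ug. unfold conjugate. gsimpl. tauto.
Qed.

Lemma normal_core_finite_index (K M : G -> Prop) : orbital G K -> is_subgroup G M ->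
  normal G M -> subset G K M -> finite_index G K M ->
  exists N, is_subgroup G N /\ subset G N K /\ finite_index G N K /\ normal G N.
Proof.
  intros oK sM nM sKM fKM. pose proof oK as [[sK _] _].
  destruct (orbital_finitely_many_conjugates K oK) as [lg Hlg].
  set (N := fun y => forall a, In a (one :: lg) -> K (conjugate a y)).
  assert (sN : is_subgroup G N).
  { apply is_subgroup_bigcap. intros a _. apply is_subgroup_conjugate; auto. }
  exists N. split; [|split; [|split]]; auto.
  - intros y Ny. rewrite <- conjugate_one. apply Ny. left; auto.
  - apply (finite_index_sub N M K); auto.
    apply finite_index_bigcap; [apply sM|]. intros a _.
    split; [apply is_subgroup_conjugate; auto|apply finite_index_conjugate; auto].
  - intros g y Ny a _. change (K (conjugate a (conjugate g y))). rewrite conjugate_comp.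
    destruct (Hlg (a * g)) as [b [Hb Eb]]. apply Eb, Ny. right; auto.
Qed.

Lemma isolated_finite_index_overgroup (K : G -> Prop) : max_condition G -> orbital G K ->
  exists M, isolated_orbital G M /\ subset G K M /\ finite_index G K M.
Proof.
  intros hmax oK. pose proof oK as [[sK _] _].
  destruct (hmax (fun M => orbital G M /\ subset G K M /\ finite_index G K M))
    as [M [[oM [sKM fKM]] Mmax]].
  - intros H [oH _]. apply oH.
  - exists K. split; [auto|split; [intros x; auto|apply finite_index_refl; auto]].
  - exists M. split; auto. split; auto.
    intros H' oH' sMH' [x [H'x nMx]] fMH'. apply nMx, (Mmax H'); auto.
    split; [|split]; auto; [intros y Ky; auto|].
    apply (finite_index_trans K M H'); auto. apply oH'.
Qed.

Definition geq_dec (x y : G) : {x = y} + {x <> y} := excluded_middle_informative (x = y).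

Section Dietzmann.
Variable N : G -> Prop.
Hypothesis sN : is_subgroup G N.
Hypothesis nN : normal G N.

Definition eqmod a b := N (inv a * b).

Lemma eqmod_refl a : eqmod a a.
Proof. unfold eqmod. rewrite mulVg. apply sN. Qed.
Lemma eqmod_eq a b : a = b -> eqmod a b.
Proof. intros ->; apply eqmod_refl. Qed.
Lemma eqmod_sym a b : eqmod a b -> eqmod b a.
Proof. apply lcoset_sym, sN. Qed.
Lemma eqmod_trans a b c : eqmod a b -> eqmod b c -> eqmod a c.
Proof. apply lcoset_trans, sN. Qed.
Lemma eqmod_mul a a' b b' : eqmod a a' -> eqmod b b' -> eqmod (a * b) (a' * b').
Proof.
  unfold eqmod. intros Ha Hb. destruct sN as [_ [NM _]].
  replace (inv (a * b) * (a' * b')) with (conjugate (inv b) (inv a * a') * (inv b * b'))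
    by (unfold conjugate; gsimpl; reflexivity).
  apply NM; auto. apply nN; auto.
Qed.
Lemma eqmod_mulN a n : N n -> eqmod (a * n) a.
Proof. intro Hn. apply eqmod_sym. unfold eqmod. gsimpl. auto. Qed.

Variable C : list G.
Variable b : nat.
Hypothesis C_torsion : forall c, In c C -> exists k, 1 <= k <= b /\ N (prodg (repeat c k)).
Hypothesis C_conjugate_closed : forall c e, In c C -> In e C ->
  exists e', In e' C /\ eqmod e' (inv c * (e * c)).

Lemma C_conjugate_closed_repeat c m e : In c C -> In e C ->
  exists e', In e' C /\ eqmod e' (inv (prodg (repeat c m)) * (e * prodg (repeat c m))).
Proof.
  intro Hc. revert e. induction m as [|m IH]; intros e He; simpl.
  - exists e; split; auto. apply eqmod_eq. gsimpl. reflexivity.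
  - destruct (C_conjugate_closed c e Hc He) as [e1 [He1 E1]].
    destruct (IH e1 He1) as [e' [He' E']]. exists e'; split; auto.
    eapply eqmod_trans; [apply E'|].
    eapply eqmod_trans; [apply eqmod_mul; [apply eqmod_refl|apply eqmod_mul; [apply E1|apply eqmod_refl]]|].
    apply eqmod_eq. gsimpl. reflexivity.
Qed.

(* Moving every letter [c] of [w] to the front conjugates the letters it passes by a power of [c]. *)
Lemma collect_letter c w : In c C -> incl w C ->
  exists w', incl w' C /\ length w' + count_occ geq_dec w c = length w /\
    eqmod (prodg (repeat c (count_occ geq_dec w c) ++ w')) (prodg w).
Proof.
  intro Hc. induction w as [|x w IH]; intro Hw.
  - exists nil. split; [intros _ []|split; [auto|apply eqmod_refl]].
  - destruct IH as [w' [Iw' [Lw' Ew']]]; [intros a Ha; apply Hw; right; auto|].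
    simpl. destruct (geq_dec x c) as [->|Hxc].
    + exists w'. split; [|split]; auto; [simpl; lia|]. simpl. apply eqmod_mul; auto. apply eqmod_refl.
    + set (m := count_occ geq_dec w c) in *.
      destruct (C_conjugate_closed_repeat c m x Hc (Hw x (or_introl eq_refl))) as [e [He Ee]].
      exists (e :: w'). split; [intros a [<-|Ha]; auto|split; [simpl; lia|]].
      rewrite prodg_app in *. simpl.
      eapply eqmod_trans; [apply eqmod_mul; [apply eqmod_refl|apply eqmod_mul; [apply Ee|apply eqmod_refl]]|].
      eapply eqmod_trans; [|apply eqmod_mul; [apply eqmod_refl|apply Ew']].
      apply eqmod_eq. gsimpl. reflexivity.
Qed.

Lemma shorten_word w : incl w C -> length C * b < length w ->
  exists w', incl w' C /\ length w' < length w /\ eqmod (prodg w') (prodg w).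
Proof.
  intros Hw Hlen.
  destruct (count_occ_pigeonhole G geq_dec C w b Hw Hlen) as [c [Hc Hcnt]].
  destruct (C_torsion c Hc) as [k [Hk Nk]].
  destruct (collect_letter c w Hc Hw) as [w' [Iw' [Lw' Ew']]].
  set (m := count_occ geq_dec w c) in *.
  exists (repeat c (m - k) ++ w'). split; [|split].
  - intros a Ha. apply in_app_iff in Ha as [Ha|Ha]; auto. apply repeat_spec in Ha. subst; auto.
  - rewrite length_app, repeat_length. lia.
  - eapply eqmod_trans; [|apply Ew'].
    replace m with ((m - k) + k) at 2 by lia.
    rewrite repeat_app, !prodg_app. apply eqmod_mul; [|apply eqmod_refl].
    apply eqmod_sym, eqmod_mulN, Nk.
Qed.

Theorem dietzmann w : incl w C ->
  exists w', incl w' C /\ length w' <= length C * b /\ eqmod (prodg w') (prodg w).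
Proof.
  induction w as [w IH] using (well_founded_induction (Wf_nat.well_founded_ltof _ (@length G))).
  intro Hw. destruct (Compare_dec.le_lt_dec (length w) (length C * b)) as [Hle|Hgt].
  - exists w. split; [|split]; auto. apply eqmod_refl.
  - destruct (shorten_word w Hw Hgt) as [w1 [I1 [L1 E1]]].
    destruct (IH w1 L1 I1) as [w' [? [? ?]]].
    exists w'. split; [|split]; auto. eapply eqmod_trans; eauto.
Qed.
End Dietzmann.

Lemma power_in_finite_index_subgroup (N H : G -> Prop) (lH : list G) :
  is_subgroup G N -> is_subgroup G H -> (forall x, H x -> exists g, In g lH /\ N (inv g * x)) ->
  forall t, H t -> exists k, 1 <= k <= length lH /\ N (prodg (repeat t k)).
Proof.
  intros sN sH cov t Ht.
  set (R := fun i r => eqmod N r (prodg (repeat t i))).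
  assert (Hgap : forall i j r, i < j <= length lH -> R i r -> R j r ->
                   exists k, 1 <= k <= length lH /\ N (prodg (repeat t k))).
  { intros i j r Hij Ri Rj. exists (j - i). split; [lia|].
    pose proof (lcoset_trans N _ _ _ sN (lcoset_sym N _ _ sN Ri) Rj) as Nij.
    replace j with (i + (j - i)) in Nij by lia.
    rewrite repeat_app, prodg_app in Nij. gsimpl. rewrite mulA, mulVg, mul1g in Nij. auto. }
  destruct (Permutation_pigeonhole_rel R (l1 := seq 0 (S (length lH))) (l2 := lH)) as [i [j [l3 [Hp [r [_ [Ri Rj]]]]]]].
  - apply Forall_forall. intros i _. apply Exists_exists. apply cov.
    apply is_subgroup_prodg; auto. intros x Hx. apply repeat_spec in Hx. subst; auto.
  - rewrite length_seq. lia.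
  - pose proof (Permutation_NoDup Hp (seq_NoDup _ 0)) as Hnd. inversion Hnd as [|? ? Hi _]; subst.
    assert (Hin : forall k, In k (i :: j :: l3) -> k <= length lH).
    { intros k Hk. apply Permutation_sym, (Permutation_in k) in Hp; auto.
      apply in_seq in Hp. lia. }
    pose proof (Hin i (or_introl eq_refl)). pose proof (Hin j (or_intror (or_introl eq_refl))).
    destruct (PeanoNat.Nat.lt_total i j) as [Hij|[->|Hji]].
    + apply (Hgap i j r); auto.
    + destruct Hi. left; auto.
    + apply (Hgap j i r); auto.
Qed.

Definition conjugates_of (H : G -> Prop) (x : G) : Prop := exists g h, H h /\ x = conjugate g h.

Definition normal_closure (H : G -> Prop) (y : G) : Prop :=
  exists w, (forall x, In x w -> conjugates_of H x) /\ prodg w = y.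

Lemma conjugates_of_conjugate (H : G -> Prop) g x : conjugates_of H x -> conjugates_of H (conjugate g x).
Proof. intros [g' [h [Hh ->]]]. exists (g * g'), h. split; auto. apply conjugate_comp. Qed.

Lemma is_subgroup_normal_closure (H : G -> Prop) : is_subgroup G H -> is_subgroup G (normal_closure H).
Proof.
  intros [_ [_ HV]]. split; [|split].
  - exists nil. split; [intros _ []|auto].
  - intros x y [w1 [Hw1 <-]] [w2 [Hw2 <-]]. exists (w1 ++ w2). split; [|apply prodg_app].
    intros z Hz. apply in_app_iff in Hz as [?|?]; auto.
  - intros x [w [Hw <-]]. exists (rev (map inv w)). split; [|apply prodg_rev_inv].
    intros z Hz. apply in_rev, in_map_iff in Hz as [y [<- Hy]].
    destruct (Hw y Hy) as [g [h [Hh ->]]]. exists g, (inv h). split; auto. symmetry. apply conjugateV.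
Qed.

Lemma normal_normal_closure (H : G -> Prop) : normal G (normal_closure H).
Proof.
  intros g x [w [Hw <-]]. exists (map (conjugate g) w). split; [|apply prodg_conjugate].
  intros z Hz. apply in_map_iff in Hz as [y [<- Hy]]. apply conjugates_of_conjugate; auto.
Qed.

Lemma subset_normal_closure (H : G -> Prop) : subset G H (normal_closure H).
Proof.
  intros h Hh. exists [h]. split; [|apply mulg1].
  intros x [<-|[]]. exists one, h. split; auto. rewrite conjugate_one; auto.
Qed.

(* Witness: the conjugates of the coset representatives of [N] in [H] by representatives
   of the finitely many cosets of [normalizer H]. *)
Lemma conjugates_finite_mod (H N : G -> Prop) : orbital G H -> is_subgroup G N -> normal G N ->
  finite_index G N H ->
  exists C b, (forall c, In c C -> conjugates_of H c) /\
    (forall x, conjugates_of H x -> exists c, In c C /\ eqmod N c x) /\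
    (forall c, In c C -> exists k, 1 <= k <= b /\ N (prodg (repeat c k))).
Proof.
  intros oH sN nN [lH [HlH cov]]. pose proof oH as [[sH _] _].
  destruct (orbital_finitely_many_conjugates H oH) as [lg Hlg].
  exists (flat_map (fun a => map (conjugate (inv a)) lH) lg), (length lH).
  split; [|split].
  - intros c Hc. apply in_flat_map in Hc as [a [_ Hc]]. apply in_map_iff in Hc as [t [<- Ht]].
    exists (inv a), t. auto.
  - intros x [g [h [Hh ->]]]. destruct (Hlg (inv g)) as [a [Ha Ea]].
    assert (Hah : H (conjugate a (conjugate g h))).
    { apply Ea. rewrite conjugate_comp, mulVg, conjugate_one. auto. }
    destruct (cov _ Hah) as [t [Ht Nt]]. exists (conjugate (inv a) t). split.
    + apply in_flat_map. exists a. split; auto. apply in_map; auto.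
    + unfold eqmod.
      replace (inv (conjugate (inv a) t) * conjugate g h)
        with (conjugate (inv a) (inv t * conjugate a (conjugate g h)))
        by (unfold conjugate; gsimpl; reflexivity).
      apply nN; auto.
  - intros c Hc. apply in_flat_map in Hc as [a [_ Hc]]. apply in_map_iff in Hc as [t [<- Ht]].
    destruct (power_in_finite_index_subgroup N H lH sN sH cov t (HlH t Ht)) as [k [Hk Nk]].
    exists k. split; auto. rewrite prodg_repeat_conjugate. apply nN; auto.
Qed.

Lemma normal_closure_finite_index (H N : G -> Prop) : orbital G H -> is_subgroup G N ->
  normal G N -> subset G N H -> finite_index G N H -> finite_index G H (normal_closure H).
Proof.
  intros oH sN nN sNH fNH.
  destruct (conjugates_finite_mod H N oH sN nN fNH) as [C [b [C_conj [C_rep C_tors]]]].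
  assert (C_closed : forall c e, In c C -> In e C ->
            exists e', In e' C /\ eqmod N e' (inv c * (e * c))).
  { intros c e Hc He. apply C_rep.
    replace (inv c * (e * c)) with (conjugate (inv c) e) by (unfold conjugate; gsimpl; reflexivity).
    apply conjugates_of_conjugate, C_conj; auto. }
  assert (to_C : forall w, (forall x, In x w -> conjugates_of H x) ->
            exists wc, incl wc C /\ eqmod N (prodg wc) (prodg w)).
  { induction w as [|x w IH]; intro Hw.
    - exists nil. split; [intros _ []|apply eqmod_refl; auto].
    - destruct IH as [wc [Iwc Ewc]]; [intros; apply Hw; right; auto|].
      destruct (C_rep x (Hw x (or_introl eq_refl))) as [c [Hc Ec]].
      exists (c :: wc). split; [intros a [<-|Ha]; auto|]. apply eqmod_mul; auto. }
  exists (map prodg (words_upto C (length C * b))). split.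
  - intros y Hy. apply in_map_iff in Hy as [w [<- Hw]]. exists w. split; auto.
    intros x Hx. apply C_conj, (words_upto_incl C _ w Hw); auto.
  - intros y [w [Hw <-]]. destruct (to_C w Hw) as [wc [Iwc Ewc]].
    destruct (dietzmann N sN nN C b C_tors C_closed wc Iwc) as [w' [Iw' [Lw' Ew']]].
    exists (prodg w'). split; [apply in_map, in_words_upto; auto|].
    apply sNH, (eqmod_trans N sN _ _ _ Ew' Ewc).
Qed.

Lemma closed_of_finite_index (H L : G -> Prop) : is_closed G H -> is_subgroup G L ->
  subset G H L -> finite_index G H L -> is_closed G L.
Proof.
  intros cH [_ [LM _]] sHL [l [Hl cov]].
  eapply open_ext; [apply (closed_union_list (fun g x => H (inv g * x)) l);
                    intros; apply closed_lcoset; auto|].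
  intro x; split; intros Hn Hx; apply Hn; [auto|].
  destruct Hx as [g [Hg Hgx]]. replace x with (g * (inv g * x)) by (gsimpl; reflexivity). auto.
Qed.

Lemma normal_orbital (L : G -> Prop) : closed_subgroup G L -> normal G L -> orbital G L.
Proof.
  intros cL nL. split; auto. eapply open_ext; [apply open_full|]. intro g; split; auto. intros _ x.
  split; intro Lx.
  - pose proof (nL (inv g) x Lx) as Lx'. rewrite invgK in Lx'. auto.
  - replace x with (g * ((inv g * (x * g)) * inv g)) by (gsimpl; reflexivity). apply nL; auto.
Qed.

Lemma isolated_orbital_normal (H N : G -> Prop) : isolated_orbital G H -> is_subgroup G N ->
  subset G N H -> finite_index G N H -> normal G N -> normal G H.
Proof.
  intros [oH iso] sN sNH fNH nN. pose proof oH as [[sH cH] _].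
  pose proof (normal_closure_finite_index H N oH sN nN sNH fNH) as fHL.
  pose proof (is_subgroup_normal_closure H sH) as sL.
  assert (oL : orbital G (normal_closure H)).
  { apply normal_orbital; [split; auto|apply normal_normal_closure].
    apply (closed_of_finite_index H); auto. apply subset_normal_closure. }
  intros g x Hx. apply NNPP. intro Hn.
  apply (iso (normal_closure H) oL (subset_normal_closure H)); auto.
  exists (conjugate g x). split; auto. apply normal_normal_closure, subset_normal_closure; auto.
Qed.

End ProfiniteGroupTheory.

Theorem lemma1p13 (G : ProfiniteGroup) (hmax : max_condition G) :
  (forall H : G -> Prop, isolated_orbital G H -> normal G H) <->
  (forall K : G -> Prop, orbital G K ->
     exists N : G -> Prop, is_subgroup G N /\ subset G N K /\
       finite_index G N K /\ normal G N).
Proof.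
  split.
  - intros isolated_normal K oK.
    destruct (isolated_finite_index_overgroup G K hmax oK) as [M [iM [sKM fKM]]].
    pose proof iM as [[[sM _] _] _].
    apply (normal_core_finite_index G K M); auto.
  - intros has_normal_core H iH.
    destruct (has_normal_core H (proj1 iH)) as [N [sN [sNH [fNH nN]]]].
    apply (isolated_orbital_normal G H N); auto.
Qed.
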